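(* Let $\mathcal{Q}=(Q,\leq^Q)$ and $\mathcal{P}=(P,\leq^P)$ be finite posets, $w=\mathrm{width}(\mathcal{P})$, $(C_1,\dots,C_w)$ a chain partition of $\mathcal{P}$, and $f:Q\to\{1,\dots,w\}$. Let $I$ be the CSP instance with domain $P$, one variable $x_q$ for every $q\in Q$ (ranging over $C_{f(q)}$), and, for every pair of distinct $q,q'\in Q$, a constraint $c_{q,q'}$ with scope $(x_q,x_{q'})$ whose relation consists of all pairs $(p,p')$ with $p\in C_{f(q)}$, $p'\in C_{f(q')}$ such that ($p\leq^P p'$ iff $q\leq^Q q'$) and ($p'\leq^P p$ iff $q'\leq^Q q$). Then $I$ is closed under every min polymorphism that is compatible with $\leq^P$, i.e., under the binary operation $\min_{\preceq}$ for any linear order $\preceq$ on $P$ that agrees with $\leq^P$ on each chain $C_i$.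
   Context: A chain partition $(C_1,\dots,C_w)$ of $\mathcal{P}$ is a partition of $P$ into chains (sets of pairwise comparable elements). A CSP instance consists of variables, a finite domain $D$, and constraints each given by a scope (ordered tuple of variables) and a relation on $D$ of matching arity. A $k$-ary relation $R$ is closed under a function $\varphi:D^2\to D$ if for any two tuples $t_1,t_2\in R$ the tuple $(\varphi(t_1[1],t_2[1]),\dots,\varphi(t_1[k],t_2[k]))$ is in $R$; an instance is closed under $\varphi$ if all its constraint relations are. A min polymorphism is a function $\varphi(d,d')=\min\{d,d'\}$ with respect to some linear order of $D$. *)

From HB Require Import structures.
From mathcomp Require Import all_boot all_order.
From Stdlib Require List.
Set Implicit Arguments. Unset Strict Implicit. Unset Printing Implicit Defensive.
Import Order.Theory.
Open Scope order_scope.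

Definition is_chain d (P : finPOrderType d) (A : {set P}) : bool :=
  [forall x in A, forall y in A, (x <= y) || (y <= x)].

Definition is_antichain d (P : finPOrderType d) (A : {set P}) : bool :=
  [forall x in A, forall y in A, (x <= y) ==> (x == y)].

Definition width d (P : finPOrderType d) : nat :=
  (\max_(A : {set P} | is_antichain A) #|A|)%N.

Definition chain_partition d (P : finPOrderType d) (w : nat)
    (C : 'I_w -> {set P}) : Prop :=
  [/\ forall i, C i != set0,
      forall i, is_chain (C i),
      forall p : P, exists i, p \in C i &
      forall i j (p : P), p \in C i -> p \in C j -> i = j].

Record constraint (V D : Type) := Constraint {
  c_arity : nat;
  c_scope : c_arity.-tuple V;
  c_rel : pred (c_arity.-tuple D) }.

Definition csp_instance (V D : Type) := seq (constraint V D).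

Definition rel_closed_under (D : Type) (k : nat) (phi : D -> D -> D)
    (R : pred (k.-tuple D)) : Prop :=
  forall t1 t2 : k.-tuple D, R t1 -> R t2 ->
    R [tuple phi (tnth t1 i) (tnth t2 i) | i < k].

Definition instance_closed_under (V D : Type) (phi : D -> D -> D)
    (I : csp_instance V D) : Prop :=
  forall c, List.In c I -> rel_closed_under phi (@c_rel V D c).

Definition min_wrt (D : Type) (lin : rel D) (x y : D) : D :=
  if lin x y then x else y.

Definition linear_order (D : Type) (lin : rel D) : Prop :=
  [/\ reflexive lin, antisymmetric lin, transitive lin & total lin].

Definition compatible_lin d (P : finPOrderType d) (w : nat)
    (C : 'I_w -> {set P}) (lin : rel P) : Prop :=
  forall i (p p' : P), p \in C i -> p' \in C i -> lin p p' = (p <= p').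

(* unary constraint: x_q ranges over C_{f(q)} *)
Definition dom_constraint dQ dP (Q : finPOrderType dQ) (P : finPOrderType dP)
    (w : nat) (C : 'I_w -> {set P}) (f : Q -> 'I_w) (q : Q) : constraint Q P :=
  @Constraint Q P 1 [tuple q] (fun t => tnth t ord0 \in C (f q)).

Definition pair_constraint dQ dP (Q : finPOrderType dQ) (P : finPOrderType dP)
    (w : nat) (C : 'I_w -> {set P}) (f : Q -> 'I_w) (q q' : Q) : constraint Q P :=
  @Constraint Q P 2 [tuple q; q']
    (fun t => let p := tnth t ord0 in let p' := tnth t (lift ord0 ord0) in
       [&& p \in C (f q), p' \in C (f q'),
           (p <= p') == (q <= q') & (p' <= p) == (q' <= q)]).

Definition lemma_instance dQ dP (Q : finPOrderType dQ) (P : finPOrderType dP)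
    (w : nat) (C : 'I_w -> {set P}) (f : Q -> 'I_w) : csp_instance Q P :=
  [seq dom_constraint C f q | q <- enum Q] ++
  [seq pair_constraint C f qq.1 qq.2 | qq <- enum [pred qq : Q * Q | qq.1 != qq.2]].

(** On a chain C_i a compatible linear order picks the poset minimum, so the
    componentwise minimum of two solutions (a, a') and (b, b') of c_{q,q'} is
    either one of them or a "crossed" pair, say (a, b') with a <= b and
    b' <= a'.  The crossed pair has the same comparison pattern as q, q':
    if q <= q' then a <= b <= b', and conversely a <= b' <= a' forces q <= q';
    symmetrically for b' <= a. *)
From mathcomp Require Import all_boot all_order.
Set Implicit Arguments. Unset Strict Implicit. Unset Printing Implicit Defensive.
Import Order.Theory.
Open Scope order_scope.

Lemma min_wrt_in (D : Type) (lin : rel D) (A : pred D) (a b : D) :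
  a \in A -> b \in A -> min_wrt lin a b \in A.
Proof. by rewrite /min_wrt; case: ifP. Qed.

Definition cmp_pattern dQ dP (Q : porderType dQ) (P : porderType dP)
    (q q' : Q) (p p' : P) : bool :=
  ((p <= p') == (q <= q')) && ((p' <= p) == (q' <= q)).

Lemma cmp_pattern_cross dQ dP (Q : porderType dQ) (P : porderType dP)
    (q q' : Q) (a a' b b' : P) :
  cmp_pattern q q' a a' -> cmp_pattern q q' b b' -> a <= b -> b' <= a' ->
  cmp_pattern q q' a b'.
Proof.
move=> /andP[/eqP aa' /eqP a'a] /andP[/eqP bb' /eqP b'b] ab b'a'.
apply/andP; split; apply/eqP; apply/idP/idP.
- by move=> ab'; rewrite -aa'; apply: le_trans ab' b'a'.
- by rewrite -bb'; apply: le_trans ab.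
- by move=> b'a; rewrite -b'b; apply: le_trans b'a ab.
- by rewrite -a'a; apply: le_trans b'a'.
Qed.

Section MinOnChains.

Variables (d : Order.disp_t) (P : finPOrderType d) (w : nat).
Variables (C : 'I_w -> {set P}) (lin : rel P).
Hypotheses (lin_total : total lin) (lin_compat : compatible_lin C lin).

Lemma min_wrt_chain i (a b : P) : a \in C i -> b \in C i ->
  (min_wrt lin a b = a /\ a <= b) \/ (min_wrt lin a b = b /\ b <= a).
Proof.
move=> Ca Cb; rewrite /min_wrt -(lin_compat Ca Cb) -(lin_compat Cb Ca).
by case: ifP => [|ab]; [left | right; move: (lin_total a b); rewrite ab].
Qed.

Lemma cmp_pattern_min dQ (Q : porderType dQ) (q q' : Q) i j (a a' b b' : P) :
  a \in C i -> b \in C i -> a' \in C j -> b' \in C j ->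
  cmp_pattern q q' a a' -> cmp_pattern q q' b b' ->
  cmp_pattern q q' (min_wrt lin a b) (min_wrt lin a' b').
Proof.
move=> Ca Cb Ca' Cb' ha hb.
have [[-> ab]|[-> ba]] := min_wrt_chain Ca Cb;
  have [[-> ab']|[-> ba']] := min_wrt_chain Ca' Cb' => //.
- exact: cmp_pattern_cross ha hb ab ba'.
- exact: cmp_pattern_cross hb ha ba ab'.
Qed.

Variables (dQ : Order.disp_t) (Q : finPOrderType dQ) (f : Q -> 'I_w).

Lemma dom_constraint_closed q :
  rel_closed_under (min_wrt lin) (@c_rel _ _ (dom_constraint C f q)).
Proof. by move=> t1 t2 /= h1 h2; rewrite tnth_mktuple; apply: min_wrt_in. Qed.

Lemma pair_constraint_closed q q' :
  rel_closed_under (min_wrt lin) (@c_rel _ _ (pair_constraint C f q q')).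
Proof.
move=> t1 t2 /and3P[Ca Ca' ha] /and3P[Cb Cb' hb] /=; rewrite !tnth_mktuple.
rewrite (min_wrt_in _ Ca Cb) (min_wrt_in _ Ca' Cb') /=.
exact: cmp_pattern_min Ca Cb Ca' Cb' ha hb.
Qed.

End MinOnChains.

Theorem lemma3p3 (dQ dP : Order.disp_t) (Q : finPOrderType dQ) (P : finPOrderType dP)
    (w : nat) (C : 'I_w -> {set P}) (f : Q -> 'I_w) :
  w = width P ->
  chain_partition C ->
  forall lin : rel P, linear_order lin -> compatible_lin C lin ->
    instance_closed_under (min_wrt lin) (lemma_instance C f).
Proof.
move=> _ _ lin [_ _ _ lin_total] lin_compat c /(List.in_app_or _ _ c)[].
- by move=> /(List.in_map_iff _ _ c)[q [<- _]]; apply: dom_constraint_closed.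
- move=> /(List.in_map_iff _ _ c)[[q q'] [<- _]].
  exact: pair_constraint_closed.
Qed.
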